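(* Consider the coded distributed inference model below with decoding at the users. For any coding scheme, the total latency $\tau_u=\mathbb{E}[L_c]+\mathbb{E}[L_{dec}^u]+\mathbb{E}[L_d^u]$ satisfies $$\tau_u\ \ge\ \mathbb{E}\Big[\min_{p\in\{k,\dots,e\mu k\}}\big(\underline{L}_c(\Lambda,p)+\underline{L}_d^u(p)\big)\Big],$$ where the expectation is over the straggling times $\Lambda=(\Lambda_1,\dots,\Lambda_e)$.
   Context: Model: $e$ edge nodes, $u$ users, a $k\times r$ matrix over $\mathrm{GF}(q)$, storage parameter $\mu$ with $\mu k\in\mathbb{N}$, product time $\delta>0$, transmission rate $\nu>0$. Straggling times $\Lambda_1,\dots,\Lambda_e$ are i.i.d. exponential with mean $\beta$. A coding scheme stores $s$ coded rows at each edge node, with $k/e\le s\le\mu k$, and for each realization $\lambda$ of $\Lambda$ stops after a total number $P=P(\lambda)\in\{k,\dots,es\}$ of computed products; the computed products include $v\ge k$ distinct products, the $i$th computed $m_i\ge1$ times, with $\sum_i m_i=P$. Edge node $j$ has completed $\min\{\lfloor (t-\lambda_j)^+/\delta\rfloor, s\}$ products at time $t$, and the computation latency is $L_c=\min\{t\ge0:\sum_{j=1}^e\min\{\lfloor (t-\lambda_j)^+/\delta\rfloor,s\}\ge P\}$. The downlink latency is $L_d^u=\frac{u\log_2(q)}{\nu}\sum_i 1/m_i$, and the decoding latency $L_{dec}^u\ge 0$. Here $(x)^+=\max\{x,0\}$, $\underline{L}_c(\lambda,p)=\min\{t\ge0:\sum_{j=1}^e\min\{\lfloor (t-\lambda_j)^+/\delta\rfloor,\mu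 k\}\ge p\}$, and $\underline{L}_d^u(p)=\frac{u\log_2 q}{\nu}\frac{k^2}{p}$ if $p/k\in\mathbb{N}$, and $\underline{L}_d^u(p)=\frac{u\log_2 q}{\nu}\big(\frac{\lceil p/k\rceil k-p}{\lfloor p/k\rfloor}+\frac{p-k\lfloor p/k\rfloor}{\lceil p/k\rceil}\big)$ otherwise. *)

From HB Require Import structures.
From mathcomp Require Import all_boot all_order all_algebra.
From mathcomp Require Import all_classical all_reals all_analysis.
Set Implicit Arguments. Unset Strict Implicit. Unset Printing Implicit Defensive.
Import Order.TTheory GRing.Theory Num.Theory.
Local Open Scope classical_set_scope.
Local Open Scope ring_scope.

Section Defs.
Context {R : realType}.

(* Number of products completed by all edge nodes at time t, when each node
   stores [s] coded rows, product time [delta], straggling times [lam]: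
   sum_j min{ floor((t - lam_j)^+ / delta), s }. *)
Definition completed (e : nat) (delta : R) (s : nat) (lam : 'I_e -> R) (t : R)
  : nat :=
  (\sum_(j < e) minn (Num.truncn (Num.max 0 (t - lam j) / delta)%R) s)%N.

(* min { t >= 0 : completed ... t >= p } (written as the infimum; the set is
   a closed half-line [t0, +oo[ whenever nonempty, so this is its minimum). *)
Definition comp_latency (e : nat) (delta : R) (s : nat) (lam : 'I_e -> R)
  (p : nat) : R :=
  inf [set t : R | 0 <= t /\ (p <= completed delta s lam t)%N].

Definition log2 (x : R) : R := ln x / ln 2.

Definition down_latency (u q : nat) (nu : R) (ms : seq nat) : R :=
  (u%:R * log2 q%:R / nu) * \sum_(m <- ms) (m%:R)^-1.

Definition down_latency_lb (u q k : nat) (nu : R) (p : nat) : R :=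
  let c := u%:R * log2 q%:R / nu in
  let x : R := p%:R / k%:R in
  if (p%:R / k%:R : R) \is a Num.nat then c * ((k ^ 2)%:R / p%:R)
  else c * (((Num.ceil x)%:~R * k%:R - p%:R) / (Num.floor x)%:~R
            + (p%:R - k%:R * (Num.floor x)%:~R) / (Num.ceil x)%:~R).

End Defs.

Definition mutually_independent {d} {T : measurableType d} {R : realType}
  (P : probability T R) (n : nat) (X : 'I_n -> {RV P >-> R}) : Prop :=
  forall B : 'I_n -> set R, (forall i, measurable (B i)) ->
    P (\bigcap_(i in [set: 'I_n]) (X i @^-1` B i)) =
    (\prod_(i < n) P (X i @^-1` B i))%E.

(* A coding scheme, abstracted to the quantities entering the latencies:
   the number [s] of coded rows stored per edge node, and, for each realization
   [lam] of the straggling times, the total number [cs_P lam] of computed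
   products, the multiplicities [cs_mult lam] = [m_1; ...; m_v] of the v
   distinct computed products, and the decoding latency [cs_dec lam]. *)
Record coding_scheme {R : realType} (e k mk : nat) := CodingScheme {
  cs_s : nat;
  cs_s_lb : (k%:R / e%:R <= cs_s%:R :> R);
  cs_s_ub : (cs_s <= mk)%N;
  cs_P : ('I_e -> R) -> nat;
  cs_P_range : forall lam, (k <= cs_P lam <= e * cs_s)%N;
  cs_mult : ('I_e -> R) -> seq nat;
  cs_v_ge : forall lam, (k <= size (cs_mult lam))%N;
  cs_mult_pos : forall lam, all (fun m => 0 < m)%N (cs_mult lam);
  cs_mult_sum : forall lam, sumn (cs_mult lam) = cs_P lam;
  cs_dec : ('I_e -> R) -> R;
  cs_dec_ge0 : forall lam, 0 <= cs_dec lam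
}.

From HB Require Import structures.
From mathcomp Require Import all_boot all_order all_algebra.
From mathcomp Require Import all_classical all_reals all_analysis.
From mathcomp Require Import ring lra zify measurable_realfun.
Set Implicit Arguments. Unset Strict Implicit. Unset Printing Implicit Defensive.
Import Order.TTheory GRing.Theory Num.Theory.
Local Open Scope classical_set_scope.
Local Open Scope ring_scope.

(* The bound is proved realization by realization and then integrated.
   Fix a realization [lam] of the straggling times and let p = P(lam) be the
   number of products the scheme computes.  Then
   - computation: since each node stores s <= mu k rows, by time L_c the
     nodes would also have completed p products had they stored mu k rows,
     so L_c >= underline{L}_c(lam, p);
   - downlink: 1/x is convex, so 1/m lies above the chord of 1/x through the
     integers a = floor(p/k) and a + 1; summing over the v >= k multiplicities
     with sum m_i = p gives sum_i 1/m_i >= (k(2a+1) - p)/(a(a+1)), which is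
     exactly the closed form of underline{L}_d^u(p) / (u log2 q / nu);
   - decoding: L_dec >= 0.
   Since k <= p <= e s <= e mu k, the sum of the two lower bounds dominates
   the minimum over p.  Finally the expectation is monotone and additive on
   nonnegative functions; monotonicity is proved directly from the
   definition of the integral, because the measurability of the minimum is
   not among the hypotheses. *)

Section DownlinkBound.
Variable R : realType.

(* The chord of x |-> 1/x through the integers a and a + 1 lies below the
   function at every positive integer m. *)
Lemma inv_ge_chord (m a : nat) : (0 < m)%N -> (0 < a)%N ->
  (2 * a%:R + 1 - m%:R) / (a%:R * (a%:R + 1)) <= (m%:R : R)^-1.
Proof.
move=> m_gt0 a_gt0.
have mR : (0 : R) < m%:R by rewrite ltr0n.
have aR : (0 : R) < a%:R by rewrite ltr0n.
rewrite ler_pdivrMr; last by apply: mulr_gt0 => //; lra.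
rewrite [_^-1 * _]mulrC ler_pdivlMr //.
(* (m - a)(m - a - 1) >= 0 for every integer m. *)
have [le_ma|lt_am] := leqP m a.
  have : (m%:R : R) <= a%:R by rewrite ler_nat.
  move=> h; have : 0 <= (a%:R - m%:R) * (a%:R + 1 - m%:R : R).
    by apply: mulr_ge0; lra.
  nra.
have : (a.+1%:R : R) <= m%:R by rewrite ler_nat.
rewrite -natr1 => h; have : 0 <= (m%:R - a%:R) * (m%:R - a%:R - 1 : R).
  by apply: mulr_ge0; lra.
nra.
Qed.

Lemma sum_inv_ge_chord (a : nat) (ms : seq nat) : (0 < a)%N ->
  all (fun m => 0 < m)%N ms ->
  ((size ms)%:R * (2 * a%:R + 1) - (sumn ms)%:R) / (a%:R * (a%:R + 1))
   <= \sum_(m <- ms) (m%:R : R)^-1.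
Proof.
move=> a_gt0; elim: ms => [|m ms IH] /=.
  by rewrite big_nil mul0r subr0 mul0r.
move=> /andP[m_gt0 /IH ih]; rewrite big_cons.
apply: le_trans (lerD (inv_ge_chord m_gt0 a_gt0) ih).
rewrite -mulrDl; apply: ler_wpM2r.
  by rewrite invr_ge0; apply: mulr_ge0 => //; apply: addr_ge0.
by rewrite -addn1 !natrD /=; lra.
Qed.

Lemma down_latency_lbE (u q k : nat) (nu : R) (p : nat) :
  (0 < k)%N -> (k <= p)%N ->
  down_latency_lb u q k nu p =
  (u%:R * log2 (q%:R : R) / nu) *
   ((k%:R * (2 * (p %/ k)%:R + 1) - p%:R) / ((p %/ k)%:R * ((p %/ k)%:R + 1))).
Proof.
move=> k_gt0 le_kp; rewrite /down_latency_lb /=.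
set a := (p %/ k)%N; set r := (p %% k)%N.
have pE : p = (a * k + r)%N by rewrite /a /r -divn_eq.
have lt_rk : (r < k)%N by rewrite /r ltn_mod.
have a_gt0 : (0 < a)%N by rewrite /a divn_gt0.
have kR : (0 : R) < k%:R by rewrite ltr0n.
have aR : (0 : R) < a%:R by rewrite ltr0n.
have pR : (p%:R : R) = a%:R * k%:R + r%:R by rewrite pE natrD natrM.
have xE : (p%:R / k%:R : R) = a%:R + r%:R / k%:R.
  by rewrite pR mulrDl mulfK // gt_eqF.
have floorE : Num.floor (p%:R / k%:R : R) = a%:Z.
  apply: floor_def; rewrite xE intrD /= !pmulrn; apply/andP; split.
    by rewrite lerDl divr_ge0.
  by rewrite ltrD2l ltr_pdivrMr // mul1r ltr_nat.
clearbody a.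
case: ifPn => [x_nat|x_notnat].
  have r0 : r = 0%N.
    move/natrP: x_nat => [n nE].
    have : (p%:R : R) = n%:R * k%:R by rewrite -nE mulfVK // gt_eqF.
    rewrite -natrM => /eqP; rewrite eqr_nat => /eqP pn.
    by move: lt_rk; rewrite /r pn modnMl.
  move: pR; rewrite r0 addr0 => ->.
  congr (_ * _); field.
  by apply/and3P; split; rewrite gt_eqF //; lra.
have r_gt0 : (0 < r)%N.
  rewrite lt0n; apply: contra x_notnat => /eqP r0.
  by rewrite xE r0 mul0r addr0 natr_nat.
have aS : ((a.+1)%:Z)%:~R = (a%:R : R) + 1 by rewrite natr1.
have ceilE : Num.ceil (p%:R / k%:R : R) = (a.+1)%:Z.
  apply: ceil_def; rewrite xE aS /=.
  have rR : (0 : R) < r%:R by rewrite ltr0n.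
  have -> : ((a.+1)%:Z - 1)%:~R = (a%:R : R) by rewrite -addn1 PoszD addrK.
  apply/andP; split; first by rewrite ltrDl divr_gt0.
  by rewrite lerD2l ler_pdivrMr // mul1r ler_nat ltnW.
rewrite floorE ceilE aS /=; congr (_ * _).
rewrite pR; field.
by apply/andP; split; rewrite gt_eqF //; lra.
Qed.

Variables (u q k : nat) (nu : R).
Hypothesis k_gt0 : (0 < k)%N.
Hypothesis rate_ge0 : 0 <= u%:R * log2 (q%:R : R) / nu.

(* underline{L}_d^u is nonnegative on {k, k+1, ...}: k(2a+1) >= p. *)
Lemma down_latency_lb_ge0 (p : nat) : (k <= p)%N ->
  0 <= down_latency_lb u q k nu p.
Proof.
move=> le_kp; rewrite down_latency_lbE //; apply: mulr_ge0 => //.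
set a := (p %/ k)%N.
have : (p < a.+1 * k)%N by apply: ltn_ceil.
move=> lt_p; have : (p <= k * (2 * a + 1))%N by lia.
rewrite -(ler_nat R) natrM natrD natrM => le_p.
apply: divr_ge0; first by rewrite subr_ge0.
by apply: mulr_ge0 => //; apply: addr_ge0.
Qed.

Lemma down_latency_ge_lb (ms : seq nat) :
  (k <= size ms)%N -> all (fun m => 0 < m)%N ms ->
  down_latency_lb u q k nu (sumn ms) <= down_latency u q nu ms.
Proof.
move=> le_k_size ms_gt0.
have le_k_sum : (k <= sumn ms)%N.
  apply: leq_trans le_k_size _.
  by elim: ms ms_gt0 => //= m ms IH /andP[m_gt0 /IH]; lia.
rewrite down_latency_lbE // /down_latency; apply: ler_wpM2l => //.
set a := (sumn ms %/ k)%N.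
have a_gt0 : (0 < a)%N by rewrite /a divn_gt0.
apply: le_trans (sum_inv_ge_chord a_gt0 ms_gt0).
have aR : (0 : R) < a%:R by rewrite ltr0n.
apply: ler_wpM2r; first by rewrite invr_ge0; apply: mulr_ge0; lra.
have : (k%:R : R) <= (size ms)%:R by rewrite ler_nat.
by move=> le_kR; apply: lerB => //; apply: ler_wpM2r => //; lra.
Qed.

End DownlinkBound.

Lemma log2_nat_ge0 (R : realType) (q : nat) : (0 < q)%N ->
  0 <= log2 (q%:R : R).
Proof.
move=> q_gt0; apply: divr_ge0; first by apply: ln_ge0; rewrite ler1n.
by apply: ltW; apply: ln_gt0; rewrite ltr1n.
Qed.

Section ComputationBound.
Variables (R : realType) (e : nat) (delta : R) (lam : 'I_e -> R).
Hypothesis delta_gt0 : 0 < delta.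

Lemma comp_latency_ge0 (s p : nat) : 0 <= comp_latency delta s lam p.
Proof.
rewrite /comp_latency; set A := [set t | _].
have [->|/set0P A_neq0] := eqVneq A set0; first by rewrite inf0.
by apply: lb_le_inf => // t [].
Qed.

Lemma completed_le_storage (s s' : nat) (t : R) : (s <= s')%N ->
  (completed delta s lam t <= completed delta s' lam t)%N.
Proof. by move=> le_ss'; rewrite /completed; apply: leq_sum => j _; lia. Qed.

(* Any p <= e s products are eventually completed: at time
   sum_j |lam_j| + s delta every node has computed all its s products. *)
Lemma comp_latency_feasible (s p : nat) : (p <= e * s)%N ->
  [set t : R | 0 <= t /\ (p <= completed delta s lam t)%N] !=set0.
Proof.
move=> le_p_es; set T := \sum_(j < e) `|lam j| + s%:R * delta.
have sdelta_ge0 : 0 <= (s%:R : R) * delta by rewrite mulr_ge0 // ltW.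
exists T; split; first by apply: addr_ge0 => //; apply: sumr_ge0.
apply: (leq_trans le_p_es); rewrite /completed.
have -> : (e * s = \sum_(j < e) s)%N by rewrite sum_nat_const card_ord.
apply: leq_sum => j _.
have lam_le : lam j <= \sum_(i < e) `|lam i|.
  rewrite (bigD1 j) //=; apply: le_trans (ler_norm _) _.
  by rewrite lerDl sumr_ge0.
rewrite leq_min leqnn andbT (_ : Num.max _ _ = T - lam j); last first.
  by apply/max_idPr; rewrite /T; lra.
rewrite truncn_ge_nat; last by apply: divr_ge0; [rewrite /T; lra | exact: ltW].
by rewrite ler_pdivlMr // /T; lra.
Qed.

Lemma comp_latency_le_storage (s s' p : nat) : (s <= s')%N -> (p <= e * s)%N ->
  comp_latency delta s' lam p <= comp_latency delta s lam p.
Proof.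
move=> le_ss' le_p_es; apply: lb_le_inf; first exact: comp_latency_feasible.
move=> t [t_ge0 done_t]; apply: ge_inf; first by exists 0 => y [].
by split=> //; apply: leq_trans done_t (completed_le_storage _ le_ss').
Qed.

End ComputationBound.

Definition latency_lb (R : realType) (e u q k mk : nat) (delta nu : R)
  (lam : 'I_e -> R) (p : nat) : R :=
  comp_latency delta mk lam p + down_latency_lb u q k nu p.

Section RealizationBound.
Variables (R : realType) (e u q k mk : nat) (delta nu : R).
Hypotheses (k_gt0 : (0 < k)%N) (delta_gt0 : 0 < delta).
Hypothesis rate_ge0 : 0 <= u%:R * log2 (q%:R : R) / nu.
Variable lam : 'I_e -> R.

Let F := latency_lb u q k mk delta nu lam.

Lemma min_latency_lb_ge0 : 0 <= \big[Num.min/F k]_(k <= p < (e * mk).+1) F p.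
Proof.
have F_ge0 p : (k <= p)%N -> 0 <= F p.
  move=> le_kp; apply: addr_ge0; first exact: comp_latency_ge0.
  exact: down_latency_lb_ge0.
rewrite big_seq; apply: le_bigmin; first exact: F_ge0.
by move=> p; rewrite mem_index_iota => /andP[+ _]; apply: F_ge0.
Qed.

Lemma scheme_latency_ge_min_lb (S : @coding_scheme R e k mk) :
  \big[Num.min/F k]_(k <= p < (e * mk).+1) F p <=
  comp_latency delta (cs_s S) lam (cs_P S lam) + cs_dec S lam
  + down_latency u q nu (cs_mult S lam).
Proof.
have /andP[le_kP le_P_es] := cs_P_range S lam.
have le_P_emk : (cs_P S lam <= e * mk)%N.
  by apply: leq_trans le_P_es _; rewrite leq_mul2l cs_s_ub orbT.
apply: (bigmin_inf_seq _ (cs_P S lam)) => //.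
  by rewrite mem_index_iota le_kP ltnS.
rewrite /F /latency_lb -addrA [cs_dec _ _ + _]addrC addrA.
apply: ler_wpDr; first exact: cs_dec_ge0.
apply: lerD; first exact: comp_latency_le_storage (cs_s_ub S) le_P_es.
rewrite -(cs_mult_sum S lam); apply: down_latency_ge_lb => //.
  exact: cs_v_ge.
exact: cs_mult_pos.
Qed.

End RealizationBound.

(* Monotonicity of the integral of nonnegative functions, without any
   measurability assumption: every simple function below f is below g. *)
Lemma ge0_le_integral_pointwise d (T : measurableType d) (R : realType)
  (mu : {measure set T -> \bar R}) (f g : T -> \bar R) :
  (forall x, (0 <= f x)%E) -> (forall x, (f x <= g x)%E) ->
  (\int[mu]_x f x <= \int[mu]_x g x)%E.
Proof.
move=> f_ge0 le_fg; have g_ge0 x : (0 <= g x)%E by apply: le_trans (f_ge0 x) _.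
rewrite !ge0_integralE //; apply: ereal_sup_le => _ [h le_hf <-].
by exists h => //= x; apply: le_trans (le_hf x) _; rewrite /patch; case: ifP.
Qed.

Lemma expectation_le_sum3 d (T : measurableType d) (R : realType)
  (P : probability T R) (X1 X2 X3 Y : T -> R) :
  measurable_fun [set: T] X1 -> measurable_fun [set: T] X2 ->
  measurable_fun [set: T] X3 ->
  (forall w, 0 <= X1 w) -> (forall w, 0 <= X2 w) -> (forall w, 0 <= X3 w) ->
  (forall w, 0 <= Y w) -> (forall w, Y w <= X1 w + X2 w + X3 w) ->
  ('E_P[Y] <= 'E_P[X1] + 'E_P[X2] + 'E_P[X3])%E.
Proof.
move=> mX1 mX2 mX3 X1_ge0 X2_ge0 X3_ge0 Y_ge0 le_Y.
have mE (X : T -> R) : measurable_fun [set: T] X ->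
    measurable_fun [set: T] (@EFin R \o X).
  by move=> mX; apply/measurable_EFinP.
have E_ge0 (X : T -> R) : (forall w, 0 <= X w) ->
    forall w, [set: T] w -> (0 <= (X w)%:E)%E.
  by move=> X_ge0 w _; rewrite lee_fin.
rewrite !expectation.unlock.
rewrite -ge0_integralD //; [|exact: E_ge0 X1_ge0|exact: mE
                           |exact: E_ge0 X2_ge0|exact: mE].
rewrite -ge0_integralD //; [| |exact: emeasurable_funD (mE _ mX1) (mE _ mX2)
                           |exact: E_ge0 X3_ge0|exact: mE]; last first.
  by move=> w _; rewrite adde_ge0 ?lee_fin.
apply: ge0_le_integral_pointwise => w; first by rewrite lee_fin.
by rewrite -!EFinD lee_fin.
Qed.

Theorem theorem1 (R : realType) (d : measure_display) (T : measurableType d)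
  (P : probability T R)
  (e u k q mk : nat) (mu delta nu beta : R)
  (He : (0 < e)%N) (Hu : (0 < u)%N) (Hk : (0 < k)%N)
  (Hq : exists p n : nat, prime p /\ q = (p ^ n.+1)%N)
  (Hmu : mu * k%:R = mk%:R)
  (Hdelta : 0 < delta) (Hnu : 0 < nu) (Hbeta : 0 < beta)
  (Lam : 'I_e -> {RV P >-> R})
  (HLam_exp : forall j A, measurable A ->
     distribution P (Lam j) A = exponential_prob beta^-1 A)
  (HLam_indep : mutually_independent (Lam))
  (S : @coding_scheme R e k mk)
  (Hmeas_c : measurable_fun [set: T] (fun w =>
     comp_latency delta (cs_s S) (fun j => Lam j w) (cs_P S (fun j => Lam j w))))
  (Hmeas_dec : measurable_fun [set: T] (fun w => cs_dec S (fun j => Lam j w)))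
  (Hmeas_d : measurable_fun [set: T] (fun w =>
     down_latency u q nu (cs_mult S (fun j => Lam j w)))) :
  let lam w := fun j => Lam j w in
  let F (l : 'I_e -> R) (p : nat) :=
    comp_latency delta mk l p + down_latency_lb u q k nu p in
  ('E_P[fun w => comp_latency delta (cs_s S) (lam w) (cs_P S (lam w))]
   + 'E_P[fun w => cs_dec S (lam w)]
   + 'E_P[fun w => down_latency u q nu (cs_mult S (lam w))] >=
   'E_P[fun w => \big[Num.min/F (lam w) k]_(k <= p < (e * mk).+1) F (lam w) p])%E.
Proof.
cbv zeta.
have q_gt0 : (0 < q)%N.
  by case: Hq => p [n [p_prime ->]]; rewrite expn_gt0 prime_gt0.
have rate_ge0 : 0 <= u%:R * log2 (q%:R : R) / nu.
  by apply: divr_ge0; [apply: mulr_ge0 => //; exact: log2_nat_ge0 | lra].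
apply: expectation_le_sum3 => // w.
- exact: comp_latency_ge0.
- exact: cs_dec_ge0.
- by apply: mulr_ge0 => //; apply: sumr_ge0 => m _; rewrite invr_ge0.
(* The minimum in the statement uses a convertible but syntactically
   different order instance on R, which only full conversion identifies. *)
- exact (min_latency_lb_ge0 mk delta Hk rate_ge0 _).
- exact (scheme_latency_ge_min_lb Hk Hdelta rate_ge0 _ S).
Qed.
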